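(* Let $\{X_\gamma\}_{\gamma\in\Gamma}$ be a family of nonzero strictly convex real Banach spaces and let $Z$ denote either $Z_0=\bigoplus^{c_0}_{\gamma\in\Gamma}X_\gamma$ or $Z_\infty=\bigoplus^{\ell_\infty}_{\gamma\in\Gamma}X_\gamma$. Let $\gamma_0\in\Gamma$ and $x_{\gamma_0}\in S_{X_{\gamma_0}}$. Then $A(\gamma_0,x_{\gamma_0})=\{z\in S_Z: z(\gamma_0)=x_{\gamma_0}\}$ is a maximal norm-closed proper face of $B_Z$, equivalently, a maximal convex subset of $S_Z$.
   Context: All Banach spaces are real. $Z_\infty$ is the space of families $z=(z(\gamma))_{\gamma\in\Gamma}$, $z(\gamma)\in X_\gamma$, with $\|z\|=\sup_\gamma\|z(\gamma)\|<\infty$; $Z_0$ is its closed subspace of families with $\{\gamma:\|z(\gamma)\|>\varepsilon\}$ finite for all $\varepsilon>0$. A Banach space is strictly convex if every point of its unit sphere is an extreme point of its closed unit ball. *)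

From HB Require Import structures.
From mathcomp Require Import all_boot all_order all_algebra.
From mathcomp Require Import all_classical all_reals.
From mathcomp Require Import topology normedtype.
Set Implicit Arguments. Unset Strict Implicit. Unset Printing Implicit Defensive.
Import Order.TTheory GRing.Theory Num.Theory.
Import numFieldNormedType.Exports.
Local Open Scope classical_set_scope.
Local Open Scope ring_scope.

Section Defs.
Variable R : realType.

Definition closed_unit_ball (V : normedModType R) : set V := [set x | `|x| <= 1].
Definition unit_sphere (V : normedModType R) : set V := [set x | `|x| = 1].

Definition extreme_point (V : normedModType R) (C : set V) (x : V) : Prop :=
  C x /\ forall (y w : V) (t : R), C y -> C w -> 0 < t < 1 ->
    x = t *: y + (1 - t) *: w -> y = x /\ w = x.

Definition strictly_convex (V : normedModType R) : Prop :=
  forall x : V, unit_sphere x -> extreme_point (@closed_unit_ball V) x.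

Variables (Gamma : Type) (X : Gamma -> normedModType R).
Definition fam := forall g : Gamma, X g.

Definition fcomb (t : R) (y w : fam) : fam := fun g => t *: y g + (1 - t) *: w g.
Definition fsub (y w : fam) : fam := fun g => y g - w g.

Definition supnorm (z : fam) : R := sup [set `|z g| | g in [set: Gamma]].

Definition in_Zinf (z : fam) : Prop := has_ubound [set `|z g| | g in [set: Gamma]].
Definition in_Z0 (z : fam) : Prop :=
  in_Zinf z /\ forall e : R, 0 < e -> finite_set [set g | e < `|z g|].

Inductive sum_kind := c0_sum | linf_sum.

Definition in_Z (k : sum_kind) : set fam :=
  match k with c0_sum => in_Z0 | linf_sum => in_Zinf end.

Definition BZ (k : sum_kind) : set fam := [set z | in_Z k z /\ supnorm z <= 1].
Definition SZ (k : sum_kind) : set fam := [set z | in_Z k z /\ supnorm z = 1].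

Definition fconvex (C : set fam) : Prop :=
  forall y w t, C y -> C w -> 0 <= t <= 1 -> C (fcomb t y w).

Definition norm_closed (k : sum_kind) (F : set fam) : Prop :=
  forall z, in_Z k z ->
    (forall e : R, 0 < e -> exists2 w, F w & supnorm (fsub z w) < e) -> F z.

Definition face_of_BZ (k : sum_kind) (F : set fam) : Prop :=
  F `<=` BZ k /\ fconvex F /\
  forall y w t, BZ k y -> BZ k w -> 0 < t < 1 -> F (fcomb t y w) -> F y /\ F w.

Definition proper_closed_face (k : sum_kind) (F : set fam) : Prop :=
  face_of_BZ k F /\ norm_closed k F /\ F !=set0 /\ F <> BZ k.

Definition maximal_proper_closed_face (k : sum_kind) (F : set fam) : Prop :=
  proper_closed_face k F /\
  forall G, proper_closed_face k G -> F `<=` G -> G = F.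

Definition maximal_convex_subset_SZ (k : sum_kind) (F : set fam) : Prop :=
  (F `<=` SZ k /\ fconvex F) /\
  forall C, C `<=` SZ k -> fconvex C -> F `<=` C -> C = F.

Definition A_set (k : sum_kind) (g0 : Gamma) (x0 : X g0) : set fam :=
  [set z | SZ k z /\ z g0 = x0].

End Defs.

From HB Require Import structures.
From mathcomp Require Import all_boot all_order all_algebra.
From mathcomp Require Import all_classical all_reals.
From mathcomp Require Import topology normedtype.
From mathcomp Require Import lra.
Import Order.TTheory GRing.Theory Num.Theory.
Import numFieldNormedType.Exports.
Local Open Scope classical_set_scope.
Local Open Scope ring_scope.

(* Strict convexity of X_g0 makes x0 an extreme point of its ball, so A is a
   face of B_Z; it is closed because evaluation at g0 is 1-Lipschitz.  For
   maximality, take z in B_Z with z(g0) <> x0 and reflect it: y(g0) = x0 and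
   y(g) = -z(g) for g <> g0.  Then y lies in A, and the midpoint of z and y
   vanishes off g0 and has norm < 1 at g0 by strict convexity.  Hence no convex
   subset of S_Z contains both A and z, and a face of B_Z containing both has
   a point of norm < 1, hence contains 0, hence all of B_Z, because 0 is the
   midpoint of y and -y for every y in B_Z. *)

Section StrictConvexity.
Context {R : realType}.

Lemma norm_lincomb_le {V : normedModType R} (a b : R) (u v : V) :
  `|a *: u + b *: v| <= `|a| * `|u| + `|b| * `|v|.
Proof. by rewrite -!normrZ ler_normD. Qed.

Lemma strictly_convex_comb_lt1 {V : normedModType R} (u v : V) (t : R) :
  strictly_convex V -> `|u| <= 1 -> `|v| <= 1 -> u <> v -> 0 < t < 1 ->
  `|t *: u + (1 - t) *: v| < 1.
Proof.
move=> hsc hu hv neq_uv t01; have /andP[t0 t1] := t01.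
have le1 : `|t *: u + (1 - t) *: v| <= 1.
  apply: le_trans; first exact: norm_lincomb_le.
  rewrite !ger0_norm ?subr_ge0 ?(ltW t0) ?(ltW t1) //; nra.
rewrite lt_neqAle le1 andbT; apply/eqP => eq1.
have [_ extreme] := hsc _ eq1.
have [eu ev] := extreme u v t hu hv t01 erefl.
by apply: neq_uv; rewrite eu -ev.
Qed.

End StrictConvexity.

Section Families.
Context {R : realType} {Gamma : Type} {X : Gamma -> normedModType R}.
Implicit Types (k : sum_kind) (p y w z : fam X) (F : set (fam X)).

Definition flincomb (a b : R) y w : fam X := fun g => a *: y g + b *: w g.
Definition fscale (a : R) y : fam X := fun g => a *: y g.
Definition fzero : fam X := fun g => 0.

Definition fdelta {g0 : Gamma} (v : X g0) : fam X := fun g =>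
  match pselect (g0 = g) with
  | left e => eq_rect g0 X v g e
  | right _ => 0
  end.

Lemma fdelta_id {g0} (v : X g0) : fdelta v g0 = v.
Proof. by rewrite /fdelta; case: pselect => // e; rewrite (Prop_irrelevance e erefl). Qed.

Lemma fdelta_ne {g0} (v : X g0) g : g0 <> g -> fdelta v g = 0.
Proof. by rewrite /fdelta; case: pselect. Qed.

Lemma norm_fdelta_le {g0} (v : X g0) g : `|fdelta v g| <= `|v|.
Proof.
by case: (pselect (g0 = g)) => [<-|ne]; rewrite ?fdelta_id // fdelta_ne ?normr0.
Qed.

Lemma in_Z_Zinf {k z} : in_Z k z -> in_Zinf z.
Proof. by case: k => // -[]. Qed.

Lemma norm_le_supnorm {z} g : in_Zinf z -> `|z g| <= supnorm z.
Proof. by move=> hz; apply: ub_le_sup => //; exists g. Qed.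

Lemma supnorm_le {z} {c : R} : 0 <= c -> (forall g, `|z g| <= c) -> supnorm z <= c.
Proof.
move=> c0 hz; rewrite /supnorm.
have [->|ne] := eqVneq [set `|z g| | g in [set: Gamma]] set0; first by rewrite sup0.
by apply: ge_sup; [apply/set0P | move=> _ [g _ <-]].
Qed.

Lemma supnorm_ge0 {z} : in_Zinf z -> 0 <= supnorm z.
Proof.
move=> hz; rewrite /supnorm.
have [->|/set0P[_ [g _ _]]] := eqVneq [set `|z g| | g in [set: Gamma]] set0.
  by rewrite sup0.
exact: le_trans (normr_ge0 _) (norm_le_supnorm g hz).
Qed.

Lemma in_Zinf_flincomb a b {y w} :
  in_Zinf y -> in_Zinf w -> in_Zinf (flincomb a b y w).
Proof.
move=> [My hMy] [Mw hMw]; exists (`|a| * My + `|b| * Mw) => _ [g _ <-].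
apply: le_trans; first exact: norm_lincomb_le.
by apply: lerD; apply: ler_wpM2l; rewrite ?normr_ge0 ?hMy ?hMw //; exists g.
Qed.

Lemma in_Z_flincomb {k} a b {y w} :
  in_Z k y -> in_Z k w -> in_Z k (flincomb a b y w).
Proof.
case: k => /=; last exact: in_Zinf_flincomb.
move=> [hy fin_y] [hw fin_w]; split; first exact: in_Zinf_flincomb.
move=> e e0; pose c := `|a| + `|b| + 1.
have c0 : 0 < c by rewrite /c; have := normr_ge0 a; have := normr_ge0 b; lra.
pose d := e / c.
have dc : d * c = e by rewrite /d mulfVK // gt_eqF.
have d0 : 0 < d by rewrite divr_gt0.
apply: (sub_finite_set (B := [set g | d < `|y g|] `|` [set g | d < `|w g|])).
  move=> g /=; case: (ltrP d `|y g|) => [|hyg]; first by left.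
  case: (ltrP d `|w g|) => [|hwg]; first by right.
  have := norm_lincomb_le a b (y g) (w g); rewrite /flincomb.
  have := normr_ge0 a; have := normr_ge0 b; move: dc; rewrite /c; nra.
by rewrite finite_setU; split; [apply: fin_y | apply: fin_w].
Qed.

Lemma in_Z_fscale {k} a {y} : in_Z k y -> in_Z k (fscale a y).
Proof.
move=> hy; have := in_Z_flincomb a 0 hy hy.
have -> // : flincomb a 0 y y = fscale a y.
by apply: functional_extensionality_dep => g; rewrite /flincomb scale0r addr0.
Qed.

Lemma in_Z_fsub {k y w} : in_Z k y -> in_Z k w -> in_Z k (fsub y w).
Proof.
move=> hy hw; have := in_Z_flincomb 1 (-1) hy hw.
have -> // : flincomb 1 (-1) y w = fsub y w.
by apply: functional_extensionality_dep => g; rewrite /flincomb scale1r scaleN1r.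
Qed.

Lemma in_Z_fzero {k} : in_Z k fzero.
Proof.
have bounded : in_Zinf fzero by exists 0 => _ [g _ <-]; rewrite normr0.
case: k => //=; split => // e e0.
apply: (sub_finite_set (B := set0)); last exact: finite_set0.
by move=> g /=; rewrite normr0 ltNge ltW.
Qed.

Lemma in_Z_fdelta {k g0} (v : X g0) : in_Z k (fdelta v).
Proof.
have bounded : in_Zinf (fdelta v).
  by exists `|v| => _ [g _ <-]; apply: norm_fdelta_le.
case: k => //=; split => // e e0.
apply: (sub_finite_set (B := [set g0])); last exact: finite_set1.
move=> g /=; have [<-//|ne] := pselect (g0 = g).
by rewrite fdelta_ne // normr0 ltNge ltW.
Qed.

Lemma BZ_norm_le1 {k z} g : BZ k z -> `|z g| <= 1.
Proof. by move=> [hz le1]; apply: le_trans le1; apply: norm_le_supnorm (in_Z_Zinf hz). Qed.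

Lemma BZ_norm1_SZ {k z} g : BZ k z -> `|z g| = 1 -> SZ k z.
Proof.
move=> [hz le1] eq1; split=> //; apply/le_anti; rewrite le1 -{1}eq1.
exact: norm_le_supnorm (in_Z_Zinf hz).
Qed.

Lemma BZ_fcomb {k y w t} : BZ k y -> BZ k w -> 0 <= t <= 1 -> BZ k (fcomb t y w).
Proof.
move=> By Bw /andP[t0 t1].
split; first by apply: in_Z_flincomb; [case: By | case: Bw].
apply: supnorm_le => // g; apply: le_trans; first exact: norm_lincomb_le.
have := BZ_norm_le1 g By; have := BZ_norm_le1 g Bw.
rewrite !ger0_norm ?subr_ge0 //; nra.
Qed.

Lemma BZ_fscale {k} a {y} : BZ k y -> `|a| * supnorm y <= 1 -> BZ k (fscale a y).
Proof.
move=> [hy _] le1; split; first exact: in_Z_fscale.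
apply: supnorm_le => // g; apply: le_trans le1; rewrite normrZ.
by apply/ler_wpM2l/(norm_le_supnorm g (in_Z_Zinf hy)).
Qed.

Lemma BZ_fzero k : BZ k fzero.
Proof. by split; [exact: in_Z_fzero | apply: supnorm_le => // g; rewrite normr0]. Qed.

Lemma face_BZ_fzero {k F p} :
  face_of_BZ k F -> F p -> supnorm p < 1 -> F fzero.
Proof.
move=> [sub [_ extremal]] Fp lt1.
have [hp _] := sub _ Fp.
have p0 := supnorm_ge0 (in_Z_Zinf hp).
pose t := (1 - supnorm p) / 2.
have t01 : 0 < t < 1 by rewrite /t; apply/andP; split; lra.
have t1 : 0 < 1 - t by rewrite /t; lra.
pose w := fscale (1 - t)^-1 p.
have Bw : BZ k w.
  apply: BZ_fscale (sub _ Fp) _.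
  by rewrite ger0_norm ?invr_ge0 ?(ltW t1) // ler_pdivrMl // mulr1 /t; lra.
have p_comb : fcomb t fzero w = p.
  apply: functional_extensionality_dep => g.
  by rewrite /fcomb /w /fscale scaler0 add0r scalerA mulfV ?scale1r ?gt_eqF.
by rewrite -p_comb in Fp; have [] := extremal fzero w t (BZ_fzero k) Bw t01 Fp.
Qed.

Lemma face_BZ_eq {k F} : face_of_BZ k F -> F fzero -> F = BZ k.
Proof.
move=> [sub [_ extremal]] F0; apply/seteqP; split=> // y By.
have half : 1 - 1/2 = 1/2 :> R by lra.
have zero_comb : fcomb (1/2) y (fscale (-1) y) = fzero.
  apply: functional_extensionality_dep => g.
  by rewrite /fcomb /fscale scaleN1r scalerN half addrN.
have By' : BZ k (fscale (-1) y).
  by have [_ le1] := By; apply: BZ_fscale By _; rewrite normrN1 mul1r.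
have h12 : 0 < (1/2 : R) < 1 by apply/andP; split; lra.
by rewrite -zero_comb in F0; have [] := extremal y _ (1/2) By By' h12 F0.
Qed.

Lemma face_BZ_interior_eq {k F p} :
  face_of_BZ k F -> F p -> supnorm p < 1 -> F = BZ k.
Proof. by move=> faceF Fp lt1; apply: face_BZ_eq (face_BZ_fzero faceF Fp lt1). Qed.

End Families.

Section MaximalFace.
Context {R : realType} {Gamma : Type} {X : Gamma -> normedModType R}.
Context (k : sum_kind) {g0 : Gamma} {x0 : X g0}.
Hypothesis hx0 : `|x0| = 1.
Hypothesis hsc0 : strictly_convex (X g0).

Local Notation A := (A_set k x0).

Lemma A_set_sub_BZ : A `<=` BZ k.
Proof. by move=> z [[hz eq1] _]; split; rewrite ?eq1. Qed.

Lemma mem_A_set z : BZ k z -> z g0 = x0 -> A z.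
Proof. by move=> Bz zg0; split=> //; apply: (BZ_norm1_SZ g0 Bz); rewrite zg0. Qed.

Lemma A_set_convex : fconvex A.
Proof.
move=> y w t Ay Aw t01.
apply: mem_A_set; first exact: BZ_fcomb (A_set_sub_BZ _ Ay) (A_set_sub_BZ _ Aw) t01.
by rewrite /fcomb Ay.2 Aw.2 -scalerDl subrKC scale1r.
Qed.

Lemma A_set_extremal y w t : BZ k y -> BZ k w -> 0 < t < 1 ->
  A (fcomb t y w) -> A y /\ A w.
Proof.
move=> By Bw t01 [_ m0].
have [_ extreme] := hsc0 x0 hx0.
have [yg0 wg0] := extreme _ _ t (BZ_norm_le1 g0 By) (BZ_norm_le1 g0 Bw) t01 (esym m0).
by split; apply: mem_A_set.
Qed.

Lemma A_set_closed : norm_closed k A.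
Proof.
move=> z hz approx.
have near e g : 0 < e -> exists2 w, A w & `|z g - w g| < e.
  move=> e0; have [w Aw lt_e] := approx e e0; exists w => //.
  apply: le_lt_trans lt_e; apply: (norm_le_supnorm (z := fsub z w)).
  exact/in_Z_Zinf/(in_Z_fsub hz)/(A_set_sub_BZ _ Aw).1.
have zg0 : z g0 = x0.
  apply/eqP; rewrite -subr_eq0 -normr_le0; apply/ler_addgt0Pr => e e0.
  by have [w [_ <-] /ltW] := near e g0 e0; rewrite add0r.
apply: mem_A_set => //; split=> //; apply: supnorm_le => // g.
apply/ler_addgt0Pr => e e0; have [w Aw lt_e] := near e g e0.
rewrite -(subrK (w g) (z g)); apply: le_trans (ler_normD _ _) _.
by rewrite [1 + e]addrC; apply: lerD; [exact: ltW | exact: BZ_norm_le1 (A_set_sub_BZ _ Aw)].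
Qed.

Lemma A_set_fdelta : A (fdelta x0).
Proof.
apply: mem_A_set; last exact: fdelta_id.
by split; [exact: in_Z_fdelta | apply: supnorm_le => // g; rewrite -hx0 norm_fdelta_le].
Qed.

Lemma A_set_neq_BZ : A <> BZ k.
Proof.
move=> eqA; have [[_ eq1] _] : A fzero by rewrite eqA; exact: BZ_fzero.
have : supnorm (@fzero R Gamma X) <= 0 by apply: supnorm_le => // g; rewrite normr0.
by rewrite eq1 ler10.
Qed.

Lemma A_set_proper_closed_face : proper_closed_face k A.
Proof.
split.
  by split; [exact: A_set_sub_BZ | split; [exact: A_set_convex | exact: A_set_extremal]].
split; first exact: A_set_closed.
by split; [exists (fdelta x0); exact: A_set_fdelta | exact: A_set_neq_BZ].
Qed.

Lemma A_set_midpoint_interior {z} : BZ k z -> z g0 <> x0 ->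
  exists2 y, A y & supnorm (fcomb (1/2) z y) < 1.
Proof.
move=> Bz neq.
pose y := flincomb 1 (-1) (fdelta (x0 + z g0)) z.
have yg0 : y g0 = x0 by rewrite /y /flincomb fdelta_id scale1r scaleN1r addrK.
have yg g : g0 <> g -> y g = - z g.
  by move=> ne; rewrite /y /flincomb fdelta_ne // scaler0 add0r scaleN1r.
have Ay : A y.
  apply: mem_A_set => //; split.
    by apply: in_Z_flincomb; [exact: in_Z_fdelta | case: Bz].
  apply: supnorm_le => // g; case: (pselect (g0 = g)) => [<-|ne].
    by rewrite yg0 hx0.
  by rewrite yg // normrN; exact: BZ_norm_le1 g Bz.
exists y => //.
have lt1 : `|fcomb (1/2) z y g0| < 1.
  rewrite /fcomb yg0; apply: strictly_convex_comb_lt1 => //.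
  - exact: BZ_norm_le1 g0 Bz.
  - by rewrite hx0.
  - by apply/andP; split; lra.
apply: le_lt_trans lt1; apply: supnorm_le => // g.
case: (pselect (g0 = g)) => [<-//|ne].
have half : 1 - 1/2 = 1/2 :> R by lra.
by rewrite /fcomb yg // half scalerN addrN normr0.
Qed.

Lemma A_set_maximal_face : maximal_proper_closed_face k A.
Proof.
split=> [|G [faceG [_ [_ neqG]]] AG]; first exact: A_set_proper_closed_face.
apply/seteqP; split=> // z Gz; have Bz := faceG.1 _ Gz.
have [zg0|neq] := pselect (z g0 = x0); first exact: mem_A_set.
have [y Ay lt1] := A_set_midpoint_interior Bz neq.
have h12 : 0 <= (1/2 : R) <= 1 by apply/andP; split; lra.
have Gm := faceG.2.1 z y (1/2) Gz (AG _ Ay) h12.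
by case: neqG; apply: face_BZ_interior_eq Gm lt1.
Qed.

Lemma A_set_maximal_convex : maximal_convex_subset_SZ k A.
Proof.
split=> [|C CS convC AC]; first by split; [move=> z [] | exact: A_set_convex].
apply/seteqP; split=> // z Cz; have [hz eq1] := CS _ Cz.
have [zg0|neq] := pselect (z g0 = x0); first by split.
have Bz : BZ k z by split; rewrite ?eq1.
have [y Ay lt1] := A_set_midpoint_interior Bz neq.
have h12 : 0 <= (1/2 : R) <= 1 by apply/andP; split; lra.
by have [_ eq1m] := CS _ (convC z y (1/2) Cz (AC _ Ay) h12); rewrite eq1m ltxx in lt1.
Qed.

End MaximalFace.

Theorem lemma2p7 (R : realType) (Gamma : Type)
  (X : Gamma -> completeNormedModType R)
  (hnz : forall g : Gamma, exists x : X g, x <> 0)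
  (hsc : forall g : Gamma, strictly_convex (X g))
  (k : sum_kind) (g0 : Gamma) (x0 : X g0)
  (hx0 : unit_sphere x0) :
  let Xn := fun g : Gamma => (X g : normedModType R) in
  maximal_proper_closed_face (X:=Xn) k (@A_set R Gamma Xn k g0 x0) /\
  maximal_convex_subset_SZ (X:=Xn) k (@A_set R Gamma Xn k g0 x0).
Proof.
move=> Xn; split.
- exact: (@A_set_maximal_face R Gamma Xn k g0 x0 hx0 (hsc g0)).
- exact: (@A_set_maximal_convex R Gamma Xn k g0 x0 hx0 (hsc g0)).
Qed.
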